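(* Let $\gamma$ be a Gutkin curve with contact angle $\alpha$ on the unit sphere $\mathbb{S}^2$, with geodesic curvature $\kappa$, arc-length coordinate $s$ and chord parameterizations $x(t),y(t)$, where the parameter $t$ is chosen so that $\frac{dx}{dt}=\frac{a}{\sqrt{\kappa^2(x)+\sin^2\alpha}}$ and $\frac{dy}{dt}=\frac{a}{\sqrt{\kappa^2(y)+\sin^2\alpha}}$ for a constant $a>0$. Define the function $f$ on $\gamma$, with values in $(0,\pi)$, by $\cot f=\kappa/\sin\alpha$, and set $f_1(t)=f(x(t))$, $f_2(t)=f(y(t))$. Then $$f_1'(t)+f_2'(t)=a\cot\alpha\,\big(\sin f_2(t)-\sin f_1(t)\big).$$
   Context: A smooth convex oriented closed curve $C$ on $\mathbb{S}^2$ is a Gutkin curve with contact angle $\alpha\in(0,\pi]$ if there are parameterizations $x(t),y(t)$ of $C$ with $x'(t),y'(t)>0$, $x(t)\ne y(t)$, such that for every $t$ the geodesic chord from $x(t)$ to $y(t)$ makes angle $\alpha$ with $C$ at both ends: at $x(t)$ the angle between the positively oriented tangent and the chord direction towards $y(t)$, and at $y(t)$ the angle between the chord direction (from $x(t)$ towards $y(t)$) and the positively oriented tangent. With this convention, if $L(x,y)$ is the length of the chord, then $\partial L/\partial x=-\cos\alpha$ and $\partial L/\partial y=\cos\alpha$ along the family. *)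

From Stdlib Require Import Reals.
From Coquelicot Require Import Coquelicot.
Open Scope R_scope.

Definition V3 : Type := (R * R * R)%type.
Definition vx (u : V3) : R := fst (fst u).
Definition vy (u : V3) : R := snd (fst u).
Definition vz (u : V3) : R := snd u.
Definition dot (u v : V3) : R := vx u * vx v + vy u * vy v + vz u * vz v.
Definition cross (u v : V3) : V3 :=
  (vy u * vz v - vz u * vy v, vz u * vx v - vx u * vz v, vx u * vy v - vy u * vx v).
Definition scal (c : R) (u : V3) : V3 := (c * vx u, c * vy u, c * vz u).
Definition vsub (u v : V3) : V3 := (vx u - vx v, vy u - vy v, vz u - vz v).
Definition vopp (u : V3) : V3 := (- vx u, - vy u, - vz u).
Definition vnorm (u : V3) : R := sqrt (dot u u).

Definition smooth3 (g : R -> V3) : Prop :=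
  forall (n : nat) (s : R),
    ex_derive_n (fun r => vx (g r)) n s /\
    ex_derive_n (fun r => vy (g r)) n s /\
    ex_derive_n (fun r => vz (g r)) n s.
Definition dV (g : R -> V3) (s : R) : V3 :=
  (Derive (fun r => vx (g r)) s, Derive (fun r => vy (g r)) s,
   Derive (fun r => vz (g r)) s).

Definition sphere_curve (g : R -> V3) (Lc : R) : Prop :=
  0 < Lc /\ smooth3 g /\
  (forall s, vnorm (g s) = 1) /\
  (forall s, vnorm (dV g s) = 1) /\
  (forall s, g (s + Lc) = g s) /\
  (forall s1 s2, 0 <= s1 < Lc -> 0 <= s2 < Lc -> g s1 = g s2 -> s1 = s2).

(** Geodesic curvature w.r.t. the left normal g x g' (outer normal of S^2 is g). *)
Definition geod_curv (g : R -> V3) (s : R) : R :=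
  dot (dV (dV g) s) (cross (g s) (dV g s)).

(** Convex (positively oriented, bounding the region on its left):
    nonnegative geodesic curvature. *)
Definition convex_sphere_curve (g : R -> V3) (Lc : R) : Prop :=
  sphere_curve g Lc /\ forall s, 0 <= geod_curv g s.

(** Unit tangent vector at p of the (minimizing) great-circle chord from p to q,
    pointing towards q; and unit tangent at q of the same chord, oriented from
    p towards q. *)
Definition chord_dir_start (p q : V3) : V3 :=
  let w := vsub q (scal (dot p q) p) in scal (/ vnorm w) w.
Definition chord_dir_end (p q : V3) : V3 :=
  let w := vsub (scal (dot p q) q) p in scal (/ vnorm w) w.

(** (x, y) is a Gutkin chord family of the curve g with contact angle alpha:
    x, y are arc-length coordinates (lifted to R), increasing, parameterizing
    the curve, the endpoints are distinct (and not antipodal, so the geodesic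
    chord is well defined), and the chord makes angle alpha at both ends. *)
Definition gutkin_family (g : R -> V3) (alpha : R) (x y : R -> R) : Prop :=
  (forall t, ex_derive x t /\ 0 < Derive x t) /\
  (forall t, ex_derive y t /\ 0 < Derive y t) /\
  (forall s, exists t, g (x t) = g s) /\
  (forall s, exists t, g (y t) = g s) /\
  (forall t, g (x t) <> g (y t) /\ g (x t) <> vopp (g (y t))) /\
  (forall t, dot (dV g (x t)) (chord_dir_start (g (x t)) (g (y t))) = cos alpha) /\
  (forall t, dot (chord_dir_end (g (x t)) (g (y t))) (dV g (y t)) = cos alpha).

Definition cot (u : R) : R := cos u / sin u.

(* Let p = g(x t), q = g(y t) be the ends of the chord, L its length (cos L = p.q), and n_x, n_y
   the components of q, p along the left normals g x g' at p and q.  The contact conditions fix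
   the tangential components, g'(x).q = cos(alpha) sin L and p.g'(y) = - cos(alpha) sin L, hence
   n_x^2 = n_y^2 = sin^2(alpha) sin^2 L.  Differentiating the contact conditions along the family,
   with g'' = - g + kappa (g x g') and kappa = sin(alpha) cot f, gives at each end an identity
   between f(x t), f(y t) and L involving the signs of n_x and n_y.  By continuity these signs
   are constant.  Both negative is impossible, and opposite signs keep the curvature at one end
   strictly below the curvature at the other end, which fails when that end reaches a point of
   maximal curvature.  With both signs positive the identities say cos(f(x t) + f(y t)) = cos L,
   so f(x t) + f(y t) = L = acos(p.q), and differentiating acos(p.q) gives the formula. *)

From Stdlib Require Import Reals Lra Psatz ZArith.
From Coquelicot Require Import Coquelicot.
Open Scope R_scope.

Definition vadd (u v : V3) : V3 := (vx u + vx v, vy u + vy v, vz u + vz v).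

Lemma v3_ext (u v : V3) : vx u = vx v -> vy u = vy v -> vz u = vz v -> u = v.
Proof. destruct u as [[u1 u2] u3], v as [[v1 v2] v3]; cbn; intros -> -> ->; reflexivity. Qed.

Lemma dot_comm u v : dot u v = dot v u.
Proof. unfold dot; ring. Qed.

Lemma dot_scal_l k u v : dot (scal k u) v = k * dot u v.
Proof. unfold dot, scal; cbn; ring. Qed.

Lemma dot_scal_r k u v : dot u (scal k v) = k * dot u v.
Proof. unfold dot, scal; cbn; ring. Qed.

Lemma dot_vsub_l u v w : dot (vsub u v) w = dot u w - dot v w.
Proof. unfold dot, vsub; cbn; ring. Qed.

Lemma dot_vsub_r u v w : dot u (vsub v w) = dot u v - dot u w.
Proof. unfold dot, vsub; cbn; ring. Qed.

Lemma dot_vopp_r u v : dot u (vopp v) = - dot u v.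
Proof. unfold dot, vopp; cbn; ring. Qed.

Lemma dot_self_ge0 u : 0 <= dot u u.
Proof. unfold dot; nra. Qed.

Lemma dot_self_eq0 u : dot u u = 0 -> u = (0, 0, 0).
Proof.
  destruct u as [[u1 u2] u3]; unfold dot; cbn; intro H.
  assert (H1 : u1² = 0) by (unfold Rsqr; nra).
  assert (H2 : u2² = 0) by (unfold Rsqr; nra).
  assert (H3 : u3² = 0) by (unfold Rsqr; nra).
  now rewrite (Rsqr_0_uniq _ H1), (Rsqr_0_uniq _ H2), (Rsqr_0_uniq _ H3).
Qed.

Lemma vnorm_eq1 u : vnorm u = 1 -> dot u u = 1.
Proof.
  unfold vnorm; intro H.
  now rewrite <- (sqrt_sqrt (dot u u)), H, Rmult_1_r by apply dot_self_ge0.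
Qed.

Lemma unit_dot_lt1 p q : dot p p = 1 -> dot q q = 1 -> p <> q -> dot p q < 1.
Proof.
  intros Hp Hq Hpq; apply Rnot_le_lt; intro H1; apply Hpq.
  assert (Hd : dot (vsub p q) (vsub p q) = 0).
  { apply Rle_antisym; [|apply dot_self_ge0].
    rewrite !dot_vsub_l, !dot_vsub_r, (dot_comm q p); lra. }
  apply dot_self_eq0 in Hd.
  apply v3_ext; [apply (f_equal vx) in Hd | apply (f_equal vy) in Hd | apply (f_equal vz) in Hd];
    cbn in Hd; lra.
Qed.

Lemma unit_dot_gtN1 p q : dot p p = 1 -> dot q q = 1 -> p <> vopp q -> -1 < dot p q.
Proof.
  intros Hp Hq Hpq.
  assert (Hq' : dot (vopp q) (vopp q) = 1).
  { now rewrite dot_vopp_r, dot_comm, dot_vopp_r, Ropp_involutive. }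
  pose proof (unit_dot_lt1 p (vopp q) Hp Hq' Hpq) as H.
  rewrite dot_vopp_r in H; lra.
Qed.

Definition det3 (a b c d e f g h i : R) : R :=
  a * (e * i - f * h) - b * (d * i - f * g) + c * (d * h - e * g).

Lemma dot_cross_mul a b c d e f :
  dot (cross a b) c * dot (cross d e) f =
  det3 (dot a d) (dot a e) (dot a f) (dot b d) (dot b e) (dot b f)
       (dot c d) (dot c e) (dot c f).
Proof.
  destruct a as [[a1 a2] a3], b as [[b1 b2] b3], c as [[c1 c2] c3],
    d as [[d1 d2] d3], e as [[e1 e2] e3], f as [[f1 f2] f3].
  unfold dot, cross, det3; cbn; ring.
Qed.

Lemma orthonormal_frame_expand p T w q :
  dot p p = 1 -> dot p T = 0 -> dot T T = 1 ->
  dot (cross p T) w * dot (cross p T) q = dot w q - dot p w * dot p q - dot T w * dot T q.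
Proof.
  intros H1 H2 H3; rewrite dot_cross_mul, (dot_comm T p), H1, H2, H3.
  rewrite (dot_comm w p), (dot_comm w T).
  unfold det3; ring.
Qed.

Lemma orthonormal_frame_normal_sqr p T q :
  dot p p = 1 -> dot p T = 0 -> dot T T = 1 -> dot q q = 1 ->
  dot (cross p T) q ^ 2 = 1 - dot p q ^ 2 - dot T q ^ 2.
Proof.
  intros H1 H2 H3 H4.
  transitivity (dot (cross p T) q * dot (cross p T) q); [ring|].
  rewrite orthonormal_frame_expand, H4 by assumption; ring.
Qed.

Lemma unit_normal_dot_mul p T1 q T2 :
  dot p p = 1 -> dot q q = 1 -> dot p T1 = 0 -> dot q T2 = 0 ->
  dot (cross p T1) q * dot (cross q T2) p =
  (dot p q * dot p q - 1) * dot T1 T2 - dot T1 q * dot p T2 * dot p q.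
Proof.
  intros H1 H2 H3 H4; rewrite dot_cross_mul, (dot_comm T1 p), (dot_comm q p), H1, H2, H3, H4.
  unfold det3; ring.
Qed.

Lemma vnorm_chord_start p q : dot p p = 1 -> dot q q = 1 ->
  vnorm (vsub q (scal (dot p q) p)) = sqrt (1 - dot p q ^ 2).
Proof.
  intros Hp Hq; unfold vnorm; f_equal.
  rewrite !dot_vsub_l, !dot_vsub_r, !dot_scal_l, !dot_scal_r, Hp, Hq, (dot_comm q p); ring.
Qed.

Lemma vnorm_chord_end p q : dot p p = 1 -> dot q q = 1 ->
  vnorm (vsub (scal (dot p q) q) p) = sqrt (1 - dot p q ^ 2).
Proof.
  intros Hp Hq; unfold vnorm; f_equal.
  rewrite !dot_vsub_l, !dot_vsub_r, !dot_scal_l, !dot_scal_r, Hp, Hq, (dot_comm q p); ring.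
Qed.

Lemma is_derive_Rmult (u v : R -> R) t du dv :
  is_derive u t du -> is_derive v t dv ->
  is_derive (fun r => u r * v r) t (du * v t + u t * dv).
Proof. intros Hu Hv; apply (is_derive_mult u v); auto; intros; apply Rmult_comm. Qed.

Lemma is_derive_Rmult_sub (u v w z : R -> R) t du dv dw dz :
  is_derive u t du -> is_derive v t dv -> is_derive w t dw -> is_derive z t dz ->
  is_derive (fun r => u r * v r - w r * z r) t
    ((du * v t + u t * dv) - (dw * z t + w t * dz)).
Proof.
  intros; apply (is_derive_minus (fun r => u r * v r)); apply is_derive_Rmult; auto.
Qed.

Lemma is_derive_eq (u : R -> R) (t l l' : R) : is_derive u t l -> l = l' -> is_derive u t l'.
Proof. now intros H <-. Qed.

Lemma is_derive_Rcomp (u h : R -> R) t du dh :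
  is_derive u (h t) du -> is_derive h t dh -> is_derive (fun r => u (h r)) t (dh * du).
Proof. intros Hu Hh; exact (is_derive_comp u h t du dh Hu Hh). Qed.

Lemma is_derive_ext_unique (u v : R -> R) (t l1 l2 : R) :
  (forall r, u r = v r) -> is_derive u t l1 -> is_derive v t l2 -> l1 = l2.
Proof.
  intros Huv H1 H2; apply (is_derive_ext u v) in H1; [|exact Huv].
  apply is_derive_unique in H1, H2; congruence.
Qed.

Lemma is_derive_const_eq0 (h : R -> R) k t l : (forall r, h r = k) -> is_derive h t l -> l = 0.
Proof.
  intros Hk Hh; apply is_derive_unique in Hh; rewrite <- Hh.
  rewrite (Derive_ext h (fun _ => k)) by exact Hk; apply Derive_const.
Qed.

Lemma is_derive_continuity_pt (h : R -> R) t l : is_derive h t l -> continuity_pt h t.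
Proof.
  intro Hh; apply continuity_pt_filterlim, (ex_derive_continuous (K := R_AbsRing) h).
  now exists l.
Qed.

Lemma is_derive_acos u : -1 < u < 1 -> is_derive acos u (-1 / sqrt (1 - u ^ 2)).
Proof.
  intro Hu; apply is_derive_Reals; rewrite <- Rsqr_pow2, <- (derive_pt_acos u Hu).
  exact (proj2_sig (derivable_pt_acos u Hu)).
Qed.

Definition is_derive3 (P : R -> V3) (t : R) (P' : V3) : Prop :=
  is_derive (fun r => vx (P r)) t (vx P') /\
  is_derive (fun r => vy (P r)) t (vy P') /\
  is_derive (fun r => vz (P r)) t (vz P').

Lemma is_derive3_dot P Q t P' Q' : is_derive3 P t P' -> is_derive3 Q t Q' ->
  is_derive (fun r => dot (P r) (Q r)) t (dot P' (Q t) + dot (P t) Q').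
Proof.
  intros (Px & Py & Pz) (Qx & Qy & Qz); unfold dot.
  replace (_ + _) with ((vx P' * vx (Q t) + vx (P t) * vx Q')
    + (vy P' * vy (Q t) + vy (P t) * vy Q') + (vz P' * vz (Q t) + vz (P t) * vz Q')) by ring.
  apply (is_derive_plus (fun r => _ + _)); [apply (is_derive_plus (fun r => _ * _))|];
    apply is_derive_Rmult; auto.
Qed.

Lemma is_derive3_cross P Q t P' Q' : is_derive3 P t P' -> is_derive3 Q t Q' ->
  is_derive3 (fun r => cross (P r) (Q r)) t (vadd (cross P' (Q t)) (cross (P t) Q')).
Proof.
  intros (Px & Py & Pz) (Qx & Qy & Qz); unfold is_derive3, vadd, cross; cbn.
  split; [|split]; (eapply is_derive_eq; [apply is_derive_Rmult_sub; eauto | cbn; ring]).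
Qed.

Lemma is_derive3_comp P h t P' dh : is_derive3 P (h t) P' -> is_derive h t dh ->
  is_derive3 (fun r => P (h r)) t (scal dh P').
Proof.
  intros (Px & Py & Pz) Hh.
  split; [|split];
    [ apply (is_derive_Rcomp (fun r => vx (P r)))
    | apply (is_derive_Rcomp (fun r => vy (P r)))
    | apply (is_derive_Rcomp (fun r => vz (P r))) ]; auto.
Qed.

Lemma ex_derive_n_Derive (u : R -> R) n s :
  ex_derive_n u (S n) s -> ex_derive_n (Derive u) n s.
Proof.
  destruct n as [|n]; [easy|]; cbn; intro H.
  apply (ex_derive_ext (Derive_n u (S n))); [|exact H].
  intro r; change (Derive u) with (Derive_n u 1); now rewrite Derive_n_comp, Nat.add_1_r.
Qed.

Lemma smooth3_dV g : smooth3 g -> smooth3 (dV g).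
Proof.
  intros Hg n s; destruct (Hg (S n) s) as (Hx & Hy & Hz).
  split; [|split]; apply ex_derive_n_Derive; assumption.
Qed.

Lemma smooth3_is_derive3 g s : smooth3 g -> is_derive3 g s (dV g s).
Proof.
  intro Hg; destruct (Hg 1%nat s) as (Hx & Hy & Hz).
  split; [|split]; apply Derive_correct; assumption.
Qed.

Lemma continuity_sign_constant (h : R -> R) : continuity h -> (forall t, h t <> 0) ->
  (forall t, 0 < h t) \/ (forall t, h t < 0).
Proof.
  intros Hc Hn0.
  assert (Hno_change : forall t u, h t < 0 -> 0 < h u -> False).
  { intros t u Ht Hu; destruct (Rtotal_order t u) as [Htu | [-> | Hut]]; [| lra |].
    - destruct (IVT h t u Hc Htu Ht Hu) as [z [_ Hz]]; exact (Hn0 z Hz).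
    - destruct (IVT (fun r => - h r) u t (continuity_opp h Hc) Hut) as [z [_ Hz]]; try lra.
      apply (Hn0 z); lra. }
  destruct (Rtotal_order (h 0) 0) as [H0 | [H0 | H0]]; [right | contradiction (Hn0 0) | left];
    intro t; destruct (Rtotal_order (h t) 0) as [Ht | [Ht | Ht]];
    solve [auto | contradiction (Hn0 t) | exfalso; eauto].
Qed.

Lemma continuity_sqr_eq_sign (h v : R -> R) : continuity h ->
  (forall t, h t ^ 2 = v t ^ 2) -> (forall t, 0 < v t) ->
  exists e, (e = 1 \/ e = -1) /\ forall t, h t = e * v t.
Proof.
  intros Hc Hsq Hv.
  assert (Hcases : forall t, h t = v t \/ h t = - v t)
    by (intro t; apply Rsqr_eq; rewrite !Rsqr_pow2; apply Hsq).
  destruct (continuity_sign_constant h Hc) as [Hpos | Hneg].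
  { intros t H0; specialize (Hv t); destruct (Hcases t); lra. }
  - exists 1; split; [now left|]; intro t.
    specialize (Hpos t); specialize (Hv t); destruct (Hcases t); lra.
  - exists (-1); split; [now right|]; intro t.
    specialize (Hneg t); specialize (Hv t); destruct (Hcases t); lra.
Qed.

(* One end of the chord: [X] and [Y] are the speeds of this end and of the other one,
   [c], [S] the cosine and sine of the chord length, [W = g''.q], [tt = g'(x).g'(y)], [k] and
   [n = e sa S] the curvature and the normal component at this end, [S1 = sin f], [C1 = cos f]
   at this end and [S2 = sin f] at the other end. *)
Lemma chord_end_identity a sa ca c S X Y W tt k n e e' S1 C1 S2 :
  sa ^ 2 + ca ^ 2 = 1 -> 0 < a -> 0 < sa ->
  X * W + Y * tt = - ca ^ 2 * c * (X - Y) ->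
  k * n = W + c -> tt = ca ^ 2 * c - e * e' * sa ^ 2 -> n = e * (sa * S) ->
  X = a * S1 / sa -> Y = a * S2 / sa -> k * S1 = sa * C1 ->
  e * C1 * S - S1 * c = e * e' * S2.
Proof.
  intros Hsc Ha Hsa HE Hk Htt Hn HX HY HkS.
  replace W with (k * n - c) in HE by lra; subst n X Y tt.
  replace (a * S1 / sa * (k * (e * (sa * S)) - c)) with (a * e * S * (k * S1) - a * S1 * c / sa)
    in HE by (field; lra).
  rewrite HkS in HE.
  apply (Rmult_eq_compat_l sa) in HE.
  field_simplify in HE; [|lra..].
  replace (ca ^ 2) with (1 - sa ^ 2) in HE by lra.
  apply (Rmult_eq_reg_l (a * sa ^ 2)); [lra|].
  apply Rmult_integral_contrapositive_currified; [lra | apply pow_nonzero; lra].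
Qed.

(* [c], [S]: cosine and sine of the chord length; [S1], [C1], [S2], [C2]: sines and cosines
   of the angle [f] at the two ends. *)
Section ChordRelations.
Variables (c S S1 C1 S2 C2 : R).
Hypotheses (HS : 0 < S) (HS2 : S ^ 2 = 1 - c ^ 2).

Lemma chord_relations_sum : S1 ^ 2 + C1 ^ 2 = 1 ->
  C1 * S - S1 * c = S2 -> C2 * S - S2 * c = S1 -> C1 * C2 - S1 * S2 = c.
Proof.
  intros H1 E1 E2.
  assert (HC2 : C2 = S1 * S + c * C1).
  { apply (Rmult_eq_reg_r S); [|lra].
    assert (S1 * S ^ 2 = S1 * (1 - c ^ 2)) by (rewrite HS2; ring).
    subst S2; lra. }
  assert (c * (S1 ^ 2 + C1 ^ 2) = c) by (rewrite H1; ring).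
  subst C2 S2; lra.
Qed.

Lemma chord_relations_not_both_neg : S1 ^ 2 + C1 ^ 2 = 1 ->
  0 < S1 -> 0 < S2 -> 0 <= C1 -> 0 <= C2 ->
  - C1 * S - S1 * c = S2 -> - C2 * S - S2 * c = S1 -> False.
Proof.
  intros H1 P1 P2 Q1 Q2 E1 E2.
  assert (HC2 : C2 = C1 * c - S1 * S).
  { apply (Rmult_eq_reg_r S); [|lra].
    assert (S1 * S ^ 2 = S1 * (1 - c ^ 2)) by (rewrite HS2; ring).
    subst S2; lra. }
  assert (S1 * C2 + C1 * S2 = - S * (S1 ^ 2 + C1 ^ 2)) by (subst C2 S2; ring).
  nra.
Qed.

Lemma chord_relations_mixed : S1 ^ 2 + C1 ^ 2 = 1 ->
  - C1 * S - S1 * c = - S2 -> C2 * S - S2 * c = - S1 -> 0 < C1 * S2 - C2 * S1.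
Proof.
  intros H1 E1 E2.
  assert (HS2' : S2 = C1 * S + S1 * c) by lra.
  assert (HC2 : C2 = C1 * c - S1 * S).
  { apply (Rmult_eq_reg_r S); [|lra].
    assert (S1 * S ^ 2 = S1 * (1 - c ^ 2)) by (rewrite HS2; ring).
    subst S2; lra. }
  assert (S * (S1 ^ 2 + C1 ^ 2) = S) by (rewrite H1; ring).
  subst S2 C2; lra.
Qed.

End ChordRelations.

Lemma periodic_shift_Z {T} (G : R -> T) L : (forall s, G (s + L) = G s) ->
  forall k s, G (s + IZR k * L) = G s.
Proof.
  intros HG k; induction k as [|k IHk|k IHk] using Z.peano_ind; intro s.
  - now rewrite Rmult_0_l, Rplus_0_r.
  - rewrite succ_IZR, <- (IHk s), <- (HG (s + IZR k * L)); f_equal; ring.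
  - rewrite <- Z.sub_1_r, minus_IZR, <- (IHk s), <- (HG (s + (IZR k - 1) * L)); f_equal; ring.
Qed.

Lemma periodic_reduce {T} (G : R -> T) L : 0 < L -> (forall s, G (s + L) = G s) ->
  forall s, exists r, 0 <= r < L /\ G r = G s.
Proof.
  intros HL HG s; exists (L * frac_part (s / L)).
  destruct (base_fp (s / L)) as [H0 H1]; split; [split; nra|].
  replace (L * frac_part (s / L)) with (s + IZR (- Int_part (s / L)) * L)
    by (unfold frac_part; rewrite opp_IZR; field; lra).
  apply periodic_shift_Z; assumption.
Qed.

Lemma Derive_periodic (h : R -> R) L s : (forall r, h (r + L) = h r) -> ex_derive h (s + L) ->
  Derive h (s + L) = Derive h s.
Proof.
  intros Hh [l Hl].
  assert (Hshift : is_derive (fun r => h (r + L)) s (1 * l)).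
  { apply is_derive_Rcomp; [exact Hl|].
    eapply is_derive_eq; [apply (is_derive_plus (fun r => r) (fun _ => L));
      [apply is_derive_id | apply is_derive_const] | apply Rplus_0_r]. }
  apply (is_derive_ext _ h _ _ Hh), is_derive_unique in Hshift.
  apply is_derive_unique in Hl; rewrite Hl, Hshift; symmetry; apply Rmult_1_l.
Qed.

Lemma smooth3_periodic_dV g L : smooth3 g -> (forall s, g (s + L) = g s) ->
  forall s, dV g (s + L) = dV g s.
Proof.
  intros Hg Hper s; destruct (Hg 1%nat (s + L)) as (Hx & Hy & Hz).
  unfold dV; rewrite !(Derive_periodic _ L s); auto; intro r; now rewrite Hper.
Qed.

Lemma geod_curv_continuity g : smooth3 g -> continuity (geod_curv g).
Proof.
  intros Hg s; pose proof (smooth3_dV g Hg) as Hg'; pose proof (smooth3_dV _ Hg') as Hg''.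
  eapply is_derive_continuity_pt, is_derive3_dot;
    [|apply is_derive3_cross]; apply smooth3_is_derive3; assumption.
Qed.

Lemma sin_mul_pow2 a u : (sin a * u) ^ 2 = u ^ 2 - (cos a * u) ^ 2.
Proof. pose proof (sin2_cos2 a) as H; rewrite !Rsqr_pow2 in H; rewrite !Rpow_mult_distr; nra. Qed.

Lemma cot_eq_mul_sin k sa u : 0 < sa -> 0 < u < PI -> cot u = k / sa ->
  k * sin u = sa * cos u.
Proof.
  intros Hsa Hu Hcot; pose proof (sin_gt_0 u (proj1 Hu) (proj2 Hu)).
  replace k with (sa * (k / sa)) by (field; lra).
  rewrite <- Hcot; unfold cot; field; lra.
Qed.

Lemma cot_eq_sqrt k sa u : 0 < sa -> 0 < u < PI -> cot u = k / sa ->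
  sqrt (k ^ 2 + sa ^ 2) = sa / sin u.
Proof.
  intros Hsa Hu Hcot; pose proof (sin_gt_0 u (proj1 Hu) (proj2 Hu)).
  pose proof (sin2_cos2 u) as Hsc; rewrite !Rsqr_pow2 in Hsc.
  replace k with (sa * cos u / sin u) by (rewrite <- (cot_eq_mul_sin k sa u) by auto; field; lra).
  replace ((sa * cos u / sin u) ^ 2 + sa ^ 2) with ((sa / sin u) ^ 2 * (sin u ^ 2 + cos u ^ 2))
    by (field; lra).
  rewrite Hsc, Rmult_1_r.
  apply sqrt_pow2; left; apply Rdiv_lt_0_compat; lra.
Qed.

Lemma cot_nonneg_le_PI2 k sa u : 0 <= k -> 0 < sa -> 0 < u < PI -> cot u = k / sa ->
  u <= PI / 2.
Proof.
  intros Hk Hsa Hu Hcot; pose proof (sin_gt_0 u (proj1 Hu) (proj2 Hu)).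
  pose proof (cot_eq_mul_sin k sa u Hsa Hu Hcot).
  apply Rnot_lt_le; intro Hu2; assert (cos u < 0) by (apply cos_lt_0; lra); nra.
Qed.

Lemma lt_of_cot_cross k1 k2 sa S1 C1 S2 C2 : 0 < sa -> 0 < S1 -> 0 < S2 ->
  k1 * S1 = sa * C1 -> k2 * S2 = sa * C2 -> 0 < C1 * S2 - C2 * S1 -> k2 < k1.
Proof.
  intros Hsa HS1 HS2 H1 H2 H.
  assert (E : (k1 - k2) * (S1 * S2) = sa * (C1 * S2 - C2 * S1)).
  { transitivity ((k1 * S1) * S2 - (k2 * S2) * S1); [ring|]. rewrite H1, H2; ring. }
  assert (0 < (k1 - k2) * (S1 * S2)) by (rewrite E; apply Rmult_lt_0_compat; lra).
  apply (Rmult_lt_reg_r (S1 * S2)); [apply Rmult_lt_0_compat|]; lra.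
Qed.

Section ClosedCurve.
Variables (g : R -> V3) (Lc : R).
Hypotheses (Lc_pos : 0 < Lc) (g_smooth : smooth3 g) (g_periodic : forall s, g (s + Lc) = g s).
Hypothesis g_inj : forall s1 s2, 0 <= s1 < Lc -> 0 <= s2 < Lc -> g s1 = g s2 -> s1 = s2.

Lemma geod_curv_periodic s : geod_curv g (s + Lc) = geod_curv g s.
Proof.
  pose proof (smooth3_periodic_dV g Lc g_smooth g_periodic) as Hper'.
  pose proof (smooth3_periodic_dV _ Lc (smooth3_dV g g_smooth) Hper') as Hper''.
  unfold geod_curv; now rewrite g_periodic, Hper', Hper''.
Qed.

Lemma geod_curv_reduce s : exists r, 0 <= r < Lc /\ g r = g s /\ geod_curv g r = geod_curv g s.
Proof.
  destruct (periodic_reduce (fun s => (g s, geod_curv g s)) Lc Lc_pos) with (s := s)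
    as [r [Hr Hgr]].
  { intro u; now rewrite g_periodic, geod_curv_periodic. }
  injection Hgr; eauto.
Qed.

Lemma geod_curv_same_point s1 s2 : g s1 = g s2 -> geod_curv g s1 = geod_curv g s2.
Proof.
  intro H12.
  destruct (geod_curv_reduce s1) as [r1 (Hr1 & Hg1 & Hk1)].
  destruct (geod_curv_reduce s2) as [r2 (Hr2 & Hg2 & Hk2)].
  rewrite <- Hk1, <- Hk2; f_equal; apply g_inj; congruence.
Qed.

Lemma geod_curv_max : exists M, forall s, geod_curv g s <= geod_curv g M.
Proof.
  destruct (continuity_ab_maj (geod_curv g) 0 Lc) as [M [HM _]];
    [lra | intros; apply geod_curv_continuity, g_smooth|].
  exists M; intro s; destruct (geod_curv_reduce s) as [r (Hr & _ & <-)]; apply HM; lra.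
Qed.

Lemma geod_curv_not_lt_everywhere (u v : R -> R) : (forall s, exists t, g (v t) = g s) ->
  (forall t, geod_curv g (v t) < geod_curv g (u t)) -> False.
Proof.
  intros Honto Hlt; destruct geod_curv_max as [M HM]; destruct (Honto M) as [t Ht].
  specialize (Hlt t); rewrite (geod_curv_same_point _ _ Ht) in Hlt.
  specialize (HM (u t)); lra.
Qed.

End ClosedCurve.

Section UnitSpeedSphericalCurve.
Variable g : R -> V3.
Hypothesis g_smooth : smooth3 g.
Hypothesis g_unit : forall s, vnorm (g s) = 1.
Hypothesis g_unit_speed : forall s, vnorm (dV g s) = 1.

Let g'_derive s : is_derive3 g s (dV g s) := smooth3_is_derive3 g s g_smooth.
Let g''_derive s : is_derive3 (dV g) s (dV (dV g) s) :=
  smooth3_is_derive3 (dV g) s (smooth3_dV g g_smooth).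

Lemma dot_curve_curve s : dot (g s) (g s) = 1.
Proof. apply vnorm_eq1, g_unit. Qed.

Lemma dot_tangent_tangent s : dot (dV g s) (dV g s) = 1.
Proof. apply vnorm_eq1, g_unit_speed. Qed.

Lemma dot_curve_tangent s : dot (g s) (dV g s) = 0.
Proof.
  pose proof (is_derive3_dot g g s _ _ (g'_derive s) (g'_derive s)) as H.
  apply (is_derive_const_eq0 _ 1) in H; [|exact dot_curve_curve].
  rewrite dot_comm in H; lra.
Qed.

Lemma dot_tangent_accel s : dot (dV g s) (dV (dV g) s) = 0.
Proof.
  pose proof (is_derive3_dot _ _ s _ _ (g''_derive s) (g''_derive s)) as H.
  apply (is_derive_const_eq0 _ 1) in H; [|exact dot_tangent_tangent].
  rewrite dot_comm in H; lra.
Qed.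

Lemma dot_curve_accel s : dot (g s) (dV (dV g) s) = -1.
Proof.
  pose proof (is_derive3_dot _ _ s _ _ (g'_derive s) (g''_derive s)) as H.
  apply (is_derive_const_eq0 _ 0) in H; [|exact dot_curve_tangent].
  rewrite dot_tangent_tangent in H; lra.
Qed.

(* [g'' = - g + geod_curv g * (g x g')], read off against an arbitrary vector [q]. *)
Lemma geod_curv_mul_dot_normal s q :
  geod_curv g s * dot (cross (g s) (dV g s)) q = dot (dV (dV g) s) q + dot (g s) q.
Proof.
  unfold geod_curv; rewrite dot_comm, orthonormal_frame_expand
    by auto using dot_curve_curve, dot_curve_tangent, dot_tangent_tangent.
  rewrite dot_curve_accel, dot_tangent_accel; ring.
Qed.

Section GutkinChord.
Variables (alpha : R) (x y : R -> R).
Hypothesis family : gutkin_family g alpha x y.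

Definition chord_cos t := dot (g (x t)) (g (y t)).
Definition chord_sin t := sqrt (1 - chord_cos t ^ 2).
Definition normal_x t := dot (cross (g (x t)) (dV g (x t))) (g (y t)).
Definition normal_y t := dot (cross (g (y t)) (dV g (y t))) (g (x t)).

Lemma chord_cos_bounds t : -1 < chord_cos t < 1.
Proof.
  destruct family as (_ & _ & _ & _ & Hdistinct & _); destruct (Hdistinct t) as [Hne Hnopp].
  split; [apply unit_dot_gtN1 | apply unit_dot_lt1]; auto using dot_curve_curve.
Qed.

Lemma chord_sin_pos t : 0 < chord_sin t.
Proof. apply sqrt_lt_R0; pose proof (chord_cos_bounds t); nra. Qed.

Lemma chord_sin_sqr t : chord_sin t ^ 2 = 1 - chord_cos t ^ 2.
Proof. apply pow2_sqrt; pose proof (chord_cos_bounds t); nra. Qed.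

Lemma tangent_x_dot t : dot (dV g (x t)) (g (y t)) = cos alpha * chord_sin t.
Proof.
  destruct family as (_ & _ & _ & _ & _ & Hstart & _); specialize (Hstart t).
  unfold chord_dir_start in Hstart; cbv zeta in Hstart.
  rewrite vnorm_chord_start, dot_scal_r, dot_vsub_r, dot_scal_r, (dot_comm _ (g (x t))),
    dot_curve_tangent in Hstart by apply dot_curve_curve.
  fold (chord_cos t) (chord_sin t) in Hstart; pose proof (chord_sin_pos t).
  rewrite <- Hstart; field; lra.
Qed.

Lemma tangent_y_dot t : dot (g (x t)) (dV g (y t)) = - cos alpha * chord_sin t.
Proof.
  destruct family as (_ & _ & _ & _ & _ & _ & Hend); specialize (Hend t).
  unfold chord_dir_end in Hend; cbv zeta in Hend.
  rewrite vnorm_chord_end, dot_scal_l, dot_vsub_l, dot_scal_l, dot_curve_tangent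
    in Hend by apply dot_curve_curve.
  fold (chord_cos t) (chord_sin t) in Hend; pose proof (chord_sin_pos t).
  rewrite <- Hend; field; lra.
Qed.

Lemma normal_x_sqr t : normal_x t ^ 2 = (sin alpha * chord_sin t) ^ 2.
Proof.
  rewrite sin_mul_pow2, chord_sin_sqr, <- tangent_x_dot; unfold normal_x, chord_cos.
  rewrite orthonormal_frame_normal_sqr
    by auto using dot_curve_curve, dot_curve_tangent, dot_tangent_tangent.
  ring.
Qed.

Lemma normal_y_sqr t : normal_y t ^ 2 = (sin alpha * chord_sin t) ^ 2.
Proof.
  rewrite sin_mul_pow2, chord_sin_sqr; unfold normal_y.
  rewrite orthonormal_frame_normal_sqr
    by auto using dot_curve_curve, dot_curve_tangent, dot_tangent_tangent.
  rewrite (dot_comm (dV g (y t))), tangent_y_dot, (dot_comm (g (y t))); fold (chord_cos t).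
  ring.
Qed.

Lemma normal_x_mul_normal_y t : normal_x t * normal_y t =
  chord_sin t ^ 2 * (cos alpha ^ 2 * chord_cos t - dot (dV g (x t)) (dV g (y t))).
Proof.
  unfold normal_x, normal_y; rewrite unit_normal_dot_mul
    by auto using dot_curve_curve, dot_curve_tangent.
  rewrite tangent_x_dot, tangent_y_dot; fold (chord_cos t).
  assert (HS : chord_sin t ^ 2 * dot (dV g (x t)) (dV g (y t)) =
    (1 - chord_cos t ^ 2) * dot (dV g (x t)) (dV g (y t))) by now rewrite chord_sin_sqr.
  lra.
Qed.

Lemma geod_curv_x_mul_normal t :
  geod_curv g (x t) * normal_x t = dot (dV (dV g) (x t)) (g (y t)) + chord_cos t.
Proof. apply geod_curv_mul_dot_normal. Qed.

Lemma geod_curv_y_mul_normal t :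
  geod_curv g (y t) * normal_y t = dot (dV (dV g) (y t)) (g (x t)) + chord_cos t.
Proof.
  unfold normal_y, chord_cos; rewrite geod_curv_mul_dot_normal, (dot_comm (g (y t))).
  reflexivity.
Qed.

Section ChordSpeeds.
Variables X Y : R -> R.
Hypotheses (x_speed : forall t, is_derive x t (X t)) (y_speed : forall t, is_derive y t (Y t)).

Let gx_derive t : is_derive3 (fun r => g (x r)) t (scal (X t) (dV g (x t))) :=
  is_derive3_comp g x t _ _ (g'_derive (x t)) (x_speed t).
Let gy_derive t : is_derive3 (fun r => g (y r)) t (scal (Y t) (dV g (y t))) :=
  is_derive3_comp g y t _ _ (g'_derive (y t)) (y_speed t).
Let g'x_derive t : is_derive3 (fun r => dV g (x r)) t (scal (X t) (dV (dV g) (x t))) :=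
  is_derive3_comp (dV g) x t _ _ (g''_derive (x t)) (x_speed t).
Let g'y_derive t : is_derive3 (fun r => dV g (y r)) t (scal (Y t) (dV (dV g) (y t))) :=
  is_derive3_comp (dV g) y t _ _ (g''_derive (y t)) (y_speed t).

Lemma chord_cos_derive t : is_derive chord_cos t (cos alpha * chord_sin t * (X t - Y t)).
Proof.
  eapply is_derive_eq; [exact (is_derive3_dot _ _ t _ _ (gx_derive t) (gy_derive t))|].
  rewrite dot_scal_l, dot_scal_r, tangent_x_dot, tangent_y_dot; ring.
Qed.

Lemma chord_sin_derive t : is_derive chord_sin t (- chord_cos t * cos alpha * (X t - Y t)).
Proof.
  pose proof (chord_sin_pos t) as HS.
  eapply is_derive_eq; [apply is_derive_sqrt|].
  - apply (is_derive_minus (fun _ => 1));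
      [apply is_derive_const | apply is_derive_pow, chord_cos_derive].
  - rewrite <- chord_sin_sqr; apply pow_lt, HS.
  - unfold minus, plus, opp, zero; cbv beta; fold (chord_sin t); simpl; field; lra.
Qed.

Lemma accel_x_relation t :
  X t * dot (dV (dV g) (x t)) (g (y t)) + Y t * dot (dV g (x t)) (dV g (y t)) =
  - cos alpha ^ 2 * chord_cos t * (X t - Y t).
Proof.
  pose proof (is_derive3_dot _ _ t _ _ (g'x_derive t) (gy_derive t)) as H.
  rewrite dot_scal_l, dot_scal_r in H.
  pose proof (is_derive_ext_unique _ _ t _ _ tangent_x_dot H
    (is_derive_scal _ t _ _ (chord_sin_derive t))) as E.
  lra.
Qed.

Lemma accel_y_relation t :
  Y t * dot (dV (dV g) (y t)) (g (x t)) + X t * dot (dV g (x t)) (dV g (y t)) =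
  - cos alpha ^ 2 * chord_cos t * (Y t - X t).
Proof.
  pose proof (is_derive3_dot _ _ t _ _ (gx_derive t) (g'y_derive t)) as H.
  rewrite dot_scal_l, dot_scal_r, (dot_comm (g (x t))) in H.
  pose proof (is_derive_ext_unique _ _ t _ _ tangent_y_dot H
    (is_derive_scal _ t _ _ (chord_sin_derive t))) as E.
  lra.
Qed.

Lemma normal_x_continuity : continuity normal_x.
Proof.
  intro t; eapply is_derive_continuity_pt, is_derive3_dot;
    [apply is_derive3_cross; [apply gx_derive | apply g'x_derive] | apply gy_derive].
Qed.

Lemma normal_y_continuity : continuity normal_y.
Proof.
  intro t; eapply is_derive_continuity_pt, is_derive3_dot;
    [apply is_derive3_cross; [apply gy_derive | apply g'y_derive] | apply gx_derive].
Qed.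

End ChordSpeeds.

Section ConvexGutkinCurve.
Variables (Lc a : R) (f : R -> R).
Hypotheses (Lc_pos : 0 < Lc) (g_periodic : forall s, g (s + Lc) = g s).
Hypothesis g_inj : forall s1 s2, 0 <= s1 < Lc -> 0 <= s2 < Lc -> g s1 = g s2 -> s1 = s2.
Hypothesis g_convex : forall s, 0 <= geod_curv g s.
Hypotheses (alpha_range : 0 < alpha < PI) (a_pos : 0 < a).
Hypothesis f_cot : forall s, 0 < f s < PI /\ cot (f s) = geod_curv g s / sin alpha.
Hypothesis x_speed : forall t, is_derive x t (a * sin (f (x t)) / sin alpha).
Hypothesis y_speed : forall t, is_derive y t (a * sin (f (y t)) / sin alpha).

Let sin_alpha_pos : 0 < sin alpha := sin_gt_0 _ (proj1 alpha_range) (proj2 alpha_range).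
Let sin_f_pos s : 0 < sin (f s) := sin_gt_0 _ (proj1 (proj1 (f_cot s))) (proj2 (proj1 (f_cot s))).
Let geod_curv_mul_sin s : geod_curv g s * sin (f s) = sin alpha * cos (f s) :=
  cot_eq_mul_sin _ _ _ sin_alpha_pos (proj1 (f_cot s)) (proj2 (f_cot s)).
Let f_le_PI2 s : f s <= PI / 2 :=
  cot_nonneg_le_PI2 _ _ _ (g_convex s) sin_alpha_pos (proj1 (f_cot s)) (proj2 (f_cot s)).

Let cos_f_nonneg s : 0 <= cos (f s).
Proof. apply cos_ge_0; pose proof (f_le_PI2 s); pose proof (f_cot s); lra. Qed.

Lemma chord_relations t e1 e2 :
  normal_x t = e1 * (sin alpha * chord_sin t) -> normal_y t = e2 * (sin alpha * chord_sin t) ->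
  e1 * cos (f (x t)) * chord_sin t - sin (f (x t)) * chord_cos t = e1 * e2 * sin (f (y t)) /\
  e2 * cos (f (y t)) * chord_sin t - sin (f (y t)) * chord_cos t = e1 * e2 * sin (f (x t)).
Proof.
  intros Hn1 Hn2; pose proof (chord_sin_pos t) as HS.
  pose proof (sin2_cos2 alpha) as Hsc; rewrite !Rsqr_pow2 in Hsc.
  assert (Htt : dot (dV g (x t)) (dV g (y t)) =
    cos alpha ^ 2 * chord_cos t - e1 * e2 * sin alpha ^ 2).
  { pose proof (normal_x_mul_normal_y t) as H; rewrite Hn1, Hn2 in H.
    apply (Rmult_eq_reg_l (chord_sin t ^ 2)); [lra | apply pow_nonzero; lra]. }
  split.
  - apply (chord_end_identity a (sin alpha) (cos alpha) (chord_cos t) (chord_sin t)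
      (a * sin (f (x t)) / sin alpha) (a * sin (f (y t)) / sin alpha)
      (dot (dV (dV g) (x t)) (g (y t))) (dot (dV g (x t)) (dV g (y t)))
      (geod_curv g (x t)) (normal_x t)); auto.
    + exact (accel_x_relation _ _ x_speed y_speed t).
    + apply geod_curv_x_mul_normal.
  - rewrite (Rmult_comm e1 e2) in Htt |- *.
    apply (chord_end_identity a (sin alpha) (cos alpha) (chord_cos t) (chord_sin t)
      (a * sin (f (y t)) / sin alpha) (a * sin (f (x t)) / sin alpha)
      (dot (dV (dV g) (y t)) (g (x t))) (dot (dV g (x t)) (dV g (y t)))
      (geod_curv g (y t)) (normal_y t)); auto.
    + exact (accel_y_relation _ _ x_speed y_speed t).
    + apply geod_curv_y_mul_normal.
Qed.

Lemma normal_x_sign : exists e, (e = 1 \/ e = -1) /\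
  forall t, normal_x t = e * (sin alpha * chord_sin t).
Proof.
  apply continuity_sqr_eq_sign;
    [apply (normal_x_continuity _ _ x_speed y_speed) | apply normal_x_sqr |].
  intro t; apply Rmult_lt_0_compat; [exact sin_alpha_pos | apply chord_sin_pos].
Qed.

Lemma normal_y_sign : exists e, (e = 1 \/ e = -1) /\
  forall t, normal_y t = e * (sin alpha * chord_sin t).
Proof.
  apply continuity_sqr_eq_sign;
    [apply (normal_y_continuity _ _ x_speed y_speed) | apply normal_y_sqr |].
  intro t; apply Rmult_lt_0_compat; [exact sin_alpha_pos | apply chord_sin_pos].
Qed.

Lemma normals_not_both_negative :
  (forall t, normal_x t = -1 * (sin alpha * chord_sin t)) ->
  (forall t, normal_y t = -1 * (sin alpha * chord_sin t)) -> False.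
Proof.
  intros Hn1 Hn2; destruct (chord_relations 0 _ _ (Hn1 0) (Hn2 0)) as [E1 E2].
  pose proof (sin2_cos2 (f (x 0))) as Hsc; rewrite !Rsqr_pow2 in Hsc.
  apply (chord_relations_not_both_neg (chord_cos 0) (chord_sin 0)
    (sin (f (x 0))) (cos (f (x 0))) (sin (f (y 0))) (cos (f (y 0))));
    auto using chord_sin_pos, chord_sin_sqr; lra.
Qed.

Lemma geod_curv_y_lt_x t :
  normal_x t = -1 * (sin alpha * chord_sin t) -> normal_y t = 1 * (sin alpha * chord_sin t) ->
  geod_curv g (y t) < geod_curv g (x t).
Proof.
  intros Hn1 Hn2; destruct (chord_relations t _ _ Hn1 Hn2) as [E1 E2].
  pose proof (sin2_cos2 (f (x t))) as Hsc; rewrite !Rsqr_pow2 in Hsc.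
  apply (lt_of_cot_cross _ _ (sin alpha) (sin (f (x t))) (cos (f (x t)))
    (sin (f (y t))) (cos (f (y t)))); auto.
  apply (chord_relations_mixed (chord_cos t) (chord_sin t));
    auto using chord_sin_pos, chord_sin_sqr; lra.
Qed.

Lemma geod_curv_x_lt_y t :
  normal_x t = 1 * (sin alpha * chord_sin t) -> normal_y t = -1 * (sin alpha * chord_sin t) ->
  geod_curv g (x t) < geod_curv g (y t).
Proof.
  intros Hn1 Hn2; destruct (chord_relations t _ _ Hn1 Hn2) as [E1 E2].
  pose proof (sin2_cos2 (f (y t))) as Hsc; rewrite !Rsqr_pow2 in Hsc.
  apply (lt_of_cot_cross _ _ (sin alpha) (sin (f (y t))) (cos (f (y t)))
    (sin (f (x t))) (cos (f (x t)))); auto.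
  apply (chord_relations_mixed (chord_cos t) (chord_sin t));
    auto using chord_sin_pos, chord_sin_sqr; lra.
Qed.

Lemma normals_positive t :
  normal_x t = sin alpha * chord_sin t /\ normal_y t = sin alpha * chord_sin t.
Proof.
  destruct family as (_ & _ & Hx_onto & Hy_onto & _).
  destruct normal_x_sign as [e1 [[-> | ->] Hn1]], normal_y_sign as [e2 [[-> | ->] Hn2]].
  - rewrite Hn1, Hn2; split; ring.
  - exfalso; apply (geod_curv_not_lt_everywhere g Lc Lc_pos g_smooth g_periodic g_inj y x Hx_onto).
    intro u; exact (geod_curv_x_lt_y u (Hn1 u) (Hn2 u)).
  - exfalso; apply (geod_curv_not_lt_everywhere g Lc Lc_pos g_smooth g_periodic g_inj x y Hy_onto).
    intro u; exact (geod_curv_y_lt_x u (Hn1 u) (Hn2 u)).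
  - exfalso; exact (normals_not_both_negative Hn1 Hn2).
Qed.

Lemma angle_sum_eq_acos t : f (x t) + f (y t) = acos (chord_cos t).
Proof.
  destruct (normals_positive t) as [Hn1 Hn2].
  rewrite <- (Rmult_1_l (_ * _)) in Hn1, Hn2.
  destruct (chord_relations t _ _ Hn1 Hn2) as [E1 E2].
  pose proof (sin2_cos2 (f (x t))) as Hsc; rewrite !Rsqr_pow2 in Hsc.
  assert (Hcos : cos (f (x t) + f (y t)) = chord_cos t).
  { rewrite cos_plus; apply (chord_relations_sum _ (chord_sin t));
      auto using chord_sin_pos, chord_sin_sqr; lra. }
  rewrite <- Hcos, acos_cos; [reflexivity|].
  pose proof (f_cot (x t)); pose proof (f_cot (y t));
    pose proof (f_le_PI2 (x t)); pose proof (f_le_PI2 (y t)); lra.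
Qed.

End ConvexGutkinCurve.
End GutkinChord.
End UnitSpeedSphericalCurve.

Theorem mainTheorem5
  (g : R -> V3) (Lc alpha a : R) (x y f : R -> R)
  (Hconv : convex_sphere_curve g Lc)
  (Halpha : 0 < alpha < PI)
  (Hfam : gutkin_family g alpha x y)
  (Ha : 0 < a)
  (Hx : forall t, is_derive x t
          (a / sqrt ((geod_curv g (x t)) ^ 2 + (sin alpha) ^ 2)))
  (Hy : forall t, is_derive y t
          (a / sqrt ((geod_curv g (y t)) ^ 2 + (sin alpha) ^ 2)))
  (Hf : forall s, 0 < f s < PI /\ cot (f s) = geod_curv g s / sin alpha) :
  forall t : R,
    is_derive (fun u => f (x u) + f (y u)) t
      (a * cot alpha * (sin (f (y t)) - sin (f (x t)))).
Proof.
  destruct Hconv as [(HL & Hsmooth & Hunit & Hunit' & Hper & Hinj) Hconvex].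
  assert (Hsa : 0 < sin alpha) by (apply sin_gt_0; lra).
  assert (Hspeed : forall s,
    a / sqrt (geod_curv g s ^ 2 + sin alpha ^ 2) = a * sin (f s) / sin alpha).
  { intro s; destruct (Hf s) as [Hfs Hcot]; pose proof (sin_gt_0 _ (proj1 Hfs) (proj2 Hfs)).
    rewrite (cot_eq_sqrt _ _ _ Hsa Hfs Hcot); field; lra. }
  assert (x_speed : forall t, is_derive x t (a * sin (f (x t)) / sin alpha))
    by (intro t; rewrite <- Hspeed; apply Hx).
  assert (y_speed : forall t, is_derive y t (a * sin (f (y t)) / sin alpha))
    by (intro t; rewrite <- Hspeed; apply Hy).
  intro t.
  apply (is_derive_ext (fun u => acos (chord_cos g x y u))).
  { intro u; symmetry; eapply angle_sum_eq_acos with (Lc := Lc) (a := a); eauto. }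
  eapply is_derive_eq.
  { apply (is_derive_Rcomp acos); [apply is_derive_acos; eauto using chord_cos_bounds |
      exact (chord_cos_derive g Hsmooth Hunit alpha x y Hfam _ _ x_speed y_speed t)]. }
  fold (chord_sin g x y t); pose proof (chord_sin_pos g Hunit alpha x y Hfam t).
  unfold cot; field; lra.
Qed.
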